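(* Let $u=a_1\cdots a_n$ be the input of the following algorithm and let $P_i$ be the set of positions it computes for position $i$. Algorithm: for all $a\in A$ set $n_a\gets 1$, $Q_a\gets\emptyset$; for $i=1,\ldots,n$ with $a_i=c$: set $x_i\gets n_c$, $P_i\gets Q_c$; then $n_c\gets n_c+1$, $Q_c\gets\{i\}$; then for all $a\in A$: if $n_c<n_a$ set $n_a\gets n_c$, $Q_a\gets Q_c$, else if $n_c=n_a$ set $Q_a\gets Q_a\cup Q_c$. Then, if $i$ is a $c$-position, $R^u_i = \bigcup_{j \in P_i} R^u_j \, \mathsf{X}_c$, with the convention $\bigcup_{j\in\emptyset} R^u_j\,\mathsf{X}_c=\{\mathsf{X}_c\}$.
   Context: $A$ is a finite alphabet. An $\mathsf{X}$-ranker is a nonempty word over $\{\mathsf{X}_a : a\in A\}$, evaluated on a word $w$ by: $\mathsf{X}_a(w)$ is the smallest $a$-position of $w$ and $r\mathsf{X}_a(w)$ is the smallest $a$-position greater than $r(w)$ (possibly undefined). For a position $i$ of $u$, $x_i$ is the length of a shortest $\mathsf{X}$-ranker reaching $i$, and $R^u_i$ is the set of $\mathsf{X}$-rankers $r$ with $r(u)=i$ and $|r|=x_i$. *)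

(* Positions of a word are 1-indexed, as in the paper. *)
From mathcomp Require Import all_boot.
Set Implicit Arguments. Unset Strict Implicit. Unset Printing Implicit Defensive.

Section Rankers.
Variable A : finType.

(* [next w a k] : the smallest a-position of w (1-indexed) strictly greater
   than k (k = 0 means "no lower bound"), if any. *)
Definition next (w : seq A) (a : A) (k : nat) : option nat :=
  let s := drop k w in
  let j := find (pred1 a) s in
  if j < size s then Some (k + j + 1) else None.

(* An X-ranker X_{a1} X_{a2} ... X_{am} is represented by the word [:: a1; ...; am];
   it is evaluated left to right: X_{a1}(w), then X_{a1}X_{a2}(w), ... *)
Definition eval_ranker (w : seq A) (r : seq A) : option nat :=
  foldl (fun o a => obind (next w a) o) (Some 0) r.

Definition Rset (u : seq A) (i : nat) (r : seq A) : Prop :=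
  [/\ r != [::], eval_ranker u r = Some i &
      forall r', r' != [::] -> eval_ranker u r' = Some i -> size r <= size r'].

(* The algorithm: state n_a (n : A -> nat) and Q_a (Q : A -> seq nat, sets as
   lists); i is the current (1-indexed) position; outputs the list of the P_i. *)
Fixpoint alg_run (n : A -> nat) (Q : A -> seq nat) (i : nat) (w : seq A)
  : seq (seq nat) :=
  match w with
  | [::] => [::]
  | c :: w' =>
      let P := Q c in
      let nc := (n c).+1 in
      let n' := fun a => if a == c then nc
                         else if nc < n a then nc else n a in
      let Q' := fun a => if a == c then [:: i]
                         else if nc < n a then [:: i]
                         else if nc == n a then Q a ++ [:: i]
                         else Q a in
      P :: alg_run n' Q' i.+1 w'
  end.

Definition algP (u : seq A) (i : nat) : seq nat :=
  nth [::] (alg_run (fun _ => 1) (fun _ => [::]) 1 u) i.-1.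

End Rankers.

From Pilot Require Import Defs.
From mathcomp Require Import all_boot zify.
Set Implicit Arguments. Unset Strict Implicit. Unset Printing Implicit Defensive.

(* Call the a-window at k the set of j <= k such that no a-position of u lies
   in (j, k]: these are the positions from which X_a leads to the first
   a-position after k, so the rankers reaching a c-position k + 1 are exactly
   the r X_c with r reaching the c-window at k.  After the first k letters,
   n_a - 1 is the least x_j over the a-window at k, where x_0 = 0 is realised
   by the empty ranker, and Q_a is the set of nonzero positions of the window
   attaining it.  Hence x_{k+1} = n_c, and R^u_{k+1} is the union of the
   R^u_j X_c for j in Q_c, or {X_c} when only 0 attains the minimum. *)

Section Rankers.
Variables (A : finType) (u : seq A).

Local Notation reaches r j := (eval_ranker u r = Some j).

Lemma eval_ranker_rcons r a :
  eval_ranker u (rcons r a) = obind (Defs.next u a) (eval_ranker u r).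
Proof. by rewrite /eval_ranker -cats1 foldl_cat. Qed.

Lemma next_gt a j i : Defs.next u a j = Some i -> j < i.
Proof. by rewrite /Defs.next; case: ifP => // _ [<-]; lia. Qed.

Lemma eval_ranker_pos r j : reaches r j -> (0 < j) = (r != [::]).
Proof.
case/lastP: r => [[<-] // | r a]; rewrite eval_ranker_rcons.
case: (eval_ranker u r) => //= k /next_gt j_gt_k.
have -> : rcons r a != [::] by case: r.
by apply/idP; lia.
Qed.

Lemma eval_ranker_eq0 r : reaches r 0 -> r = [::].
Proof. by move=> E; apply/eqP; rewrite -[_ == _]negbK -(eval_ranker_pos E). Qed.

Definition window (a : A) (k j : nat) :=
  j <= k /\ forall m, j < m <= k -> nth a u m.-1 != a.

Lemma window0 a j : window a 0 j <-> j = 0.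
Proof. by split=> [[]|->]; [lia | split=> // m; lia]. Qed.

Lemma window_succ_letter a k j : nth a u k = a -> (window a k.+1 j <-> j = k.+1).
Proof.
move=> u_k; split=> [[j_le free] | ->]; last by split=> // m; lia.
apply/eqP; rewrite eqn_leq j_le leqNgt; apply/negP => j_lt.
suff : nth a u k != a by rewrite u_k eqxx.
by apply: (free k.+1); lia.
Qed.

Lemma window_succ_other a k j :
  nth a u k != a -> (window a k.+1 j <-> j = k.+1 \/ window a k j).
Proof.
move=> u_k; split=> [[j_le free] | [-> | [j_le free]]].
- have [j_gt | j_le'] := ltnP k j; first by left; lia.
  by right; split=> // m m_in; apply: free; lia.
- by split=> // m; lia.
- split=> [|m m_in]; first lia.
  have [-> // | m_ne] := eqVneq m k.+1.
  by apply: free; lia.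
Qed.

Lemma next_succP a j k :
  Defs.next u a j = Some k.+1 <-> [/\ k < size u, nth a u k = a & window a k j].
Proof.
rewrite /Defs.next; case: findP => [noA | f f_lt f_a f_before].
  rewrite ltnn; split=> // -[k_lt u_k [j_le _]]; case/negP: noA; apply/hasP.
  exists (nth a (drop j u) (k - j)); last by rewrite /= nth_drop subnKC // u_k.
  by apply: mem_nth; rewrite size_drop ltn_sub2r // (leq_ltn_trans j_le).
rewrite size_drop in f_lt *; rewrite f_lt.
have u_jf : nth a u (j + f) = a by have /eqP := f_a a; rewrite nth_drop.
have free_f m : j < m <= j + f -> nth a u m.-1 != a.
  move=> m_in; have lt : m.-1 - j < f by lia.
  by move: (f_before a _ lt); rewrite /= nth_drop (_ : j + _ = m.-1) => [->|]; lia.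
split=> [[/eqP]| [k_lt u_k [j_le free]]].
  by rewrite addn1 eqSS => /eqP <-; split=> //; [lia | split=> //; lia].
suff -> : f = k - j by rewrite addn1 subnKC.
apply/eqP; rewrite eqn_leq; apply/andP; split; rewrite leqNgt; apply/negP => lt.
  by move: (f_before a _ lt); rewrite /= nth_drop subnKC // u_k eqxx.
suff : nth a u (j + f) != a by rewrite u_jf eqxx.
by apply: (free (j + f).+1); lia.
Qed.

Lemma reaches_succ c k r : k < size u -> nth c u k = c ->
  reaches r k.+1 <->
  exists2 j, window c k j & exists2 r', reaches r' j & r = rcons r' c.
Proof.
move=> k_lt u_k; split=> [|[j win [r' E ->]]]; last first.
  by rewrite eval_ranker_rcons E; apply/next_succP.
case/lastP: r => [// | r a]; rewrite eval_ranker_rcons.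
case E: (eval_ranker u r) => [j|] //= /next_succP [_ u_k' win].
have a_c : a = c by rewrite -u_k' (set_nth_default c).
by rewrite a_c in win *; exists j => //; exists r.
Qed.

Definition shortest i m :=
  (exists2 r, reaches r i & size r = m) /\ forall r, reaches r i -> m <= size r.

Lemma Rset_shortest i m r :
  0 < i -> shortest i m -> Rset u i r <-> reaches r i /\ size r = m.
Proof.
move=> i_gt0 [[r0 E0 sz0] min_m]; split=> [[r_nn E min_r] | [E sz]].
  split=> //; apply/eqP; rewrite eqn_leq min_m // -sz0 min_r //.
  by rewrite -(eval_ranker_pos E0).
by split=> [|//|r' _ /min_m]; rewrite ?sz // -(eval_ranker_pos E).
Qed.

Definition alg_inv_at k a (na : nat) (Qa : seq nat) :=
  [/\ exists2 j, window a k j & exists2 r, reaches r j & (size r).+1 = na,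
      forall j r, window a k j -> reaches r j -> na <= (size r).+1 &
      forall j, j \in Qa <->
        [/\ 0 < j, window a k j & exists2 r, reaches r j & (size r).+1 = na]].

Lemma alg_inv_at0 a : alg_inv_at 0 a 1 [::].
Proof.
split=> [|j r /window0 -> //|j]; first by exists 0; [exact/window0 | exists [::]].
by rewrite in_nil; split=> // -[j_gt0 /window0 j0 _]; lia.
Qed.

Lemma alg_inv_at_shortest k a na Qa j :
  alg_inv_at k a na Qa -> j \in Qa -> shortest j na.-1.
Proof.
case=> _ min_na memQ /memQ [_ win [r E sz]].
by split=> [|r' /(min_na _ _ win)]; [exists r => //; rewrite -sz | lia].
Qed.

Lemma alg_inv_at_nil k a na Qa :
  alg_inv_at k a na Qa -> Qa = [::] <-> na = 1 /\ window a k 0.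
Proof.
case=> [[j0 win0 [r0 E0 sz0]] _ memQ]; split=> [Qa0 | [na1 _]].
  have [j0_0 | j0_gt0] := posnP j0; last first.
    suff : j0 \in Qa by rewrite Qa0.
    by apply/memQ; split=> //; exists r0.
  move: E0 win0; rewrite j0_0 => /eval_ranker_eq0 r0_nil win0.
  by rewrite -sz0 r0_nil.
case: Qa memQ => [// | j Qa memQ].
have [j_gt0 _ [r E sz]] := (memQ j).1 (mem_head j Qa).
have r_nil : r = [::] by apply/size0nil; move: sz; rewrite na1 => -[].
by move: E j_gt0; rewrite r_nil => -[<-].
Qed.

Lemma shortest_succ k c nc Qc : k < size u -> nth c u k = c ->
  alg_inv_at k c nc Qc -> shortest k.+1 nc.
Proof.
move=> k_lt u_k [[j win [r E sz]] min_nc _]; split.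
  exists (rcons r c); last by rewrite size_rcons.
  by apply/(reaches_succ _ k_lt u_k); exists j => //; exists r.
move=> r' /(reaches_succ _ k_lt u_k) [j' win' [r'' E' ->]].
by rewrite size_rcons; exact: min_nc win' E'.
Qed.

Definition Rset_union i c (P : seq nat) := forall r,
  Rset u i r <->
  ((P = [::] /\ r = [:: c]) \/
   (exists2 j, j \in P & exists2 r', Rset u j r' & r = rcons r' c)).

Lemma alg_inv_at_Rset_union k c nc Qc : k < size u -> nth c u k = c ->
  alg_inv_at k c nc Qc -> Rset_union k.+1 c Qc.
Proof.
move=> k_lt u_k inv r.
have R_succ := Rset_shortest r (ltn0Sn k) (shortest_succ k_lt u_k inv).
have Q_nil := alg_inv_at_nil inv; have [_ _ memQ] := inv.
have R_Q j r' : j \in Qc -> Rset u j r' <-> reaches r' j /\ size r' = nc.-1.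
  move=> jQ; have [j_gt0 _ _] := (memQ j).1 jQ.
  exact: Rset_shortest (alg_inv_at_shortest inv jQ).
rewrite R_succ; split=> [[/(reaches_succ _ k_lt u_k) [j win [r' E ->]]] | ].
  rewrite size_rcons => sz; have [j0 | j_gt0] := posnP j.
    move: E win; rewrite j0 => /eval_ranker_eq0 r'0 win0.
    by rewrite r'0 in sz *; left; split=> //; apply/Q_nil.
  have jQ : j \in Qc by apply/memQ; split=> //; exists r'.
  by right; exists j => //; exists r' => //; apply/R_Q => //; split=> //; lia.
case=> [[/Q_nil [nc1 win0] ->] | [j jQ [r' Rr' ->]]].
  by split=> //; apply/(reaches_succ _ k_lt u_k); exists 0 => //; exists [::].
have [j_gt0 win [r1 _ sz1]] := (memQ j).1 jQ.
have [E sz] := (R_Q j r' jQ).1 Rr'.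
split; first by apply/(reaches_succ _ k_lt u_k); exists j => //; exists r'.
by rewrite size_rcons sz; lia.
Qed.

Lemma alg_inv_at_letter a k m : nth a u k = a -> shortest k.+1 m ->
  alg_inv_at k.+1 a m.+1 [:: k.+1].
Proof.
move=> u_k [[r E sz] min_m]; have win j := @window_succ_letter a k j u_k.
split=> [|j r' /win -> /min_m //|j].
  by exists k.+1; [exact/win | exists r => //; rewrite sz].
rewrite inE; split=> [/eqP -> | [_ /win -> _]] //.
by split=> //; [exact/win | exists r => //; rewrite sz].
Qed.

Lemma alg_inv_at_other a k m na Qa : nth a u k != a -> shortest k.+1 m ->
  alg_inv_at k a na Qa ->
  alg_inv_at k.+1 a (if m.+1 < na then m.+1 else na)
    (if m.+1 < na then [:: k.+1] else if m.+1 == na then Qa ++ [:: k.+1] else Qa).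
Proof.
move=> u_k [[r E sz] min_m] [[j0 win0 [r0 E0 sz0]] min_na memQ].
have win j := @window_succ_other a k j u_k.
case: ltngtP => [lt | gt | eq]; split.
- by exists k.+1; [apply/win; left | exists r => //; rewrite sz].
- by move=> j r' /win [-> /min_m | w /(min_na _ _ w)]; lia.
- move=> j; rewrite inE; split=> [/eqP -> | [_ /win [-> // | w] [r' E' sz']]].
    by split=> //; [apply/win; left | exists r => //; rewrite sz].
  by have := min_na _ _ w E'; lia.
- by exists j0; [apply/win; right | exists r0].
- by move=> j r' /win [-> /min_m | w /(min_na _ _ w)]; lia.
- move=> j; split=> [/memQ [j_gt0 w ex] | [j_gt0 /win [-> | w] ex]].
  + by split=> //; apply/win; right.
  + by case: ex => r' /min_m; lia.
  + exact/memQ.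
- by exists j0; [apply/win; right | exists r0].
- by move=> j r' /win [-> /min_m | w /(min_na _ _ w)]; lia.
- move=> j; rewrite mem_cat inE.
  split=> [/orP [/memQ [j_gt0 w ex] | /eqP ->] | [j_gt0 /win [-> | w] ex]].
  + by split=> //; apply/win; right.
  + by split=> //; [apply/win; left | exists r => //; rewrite sz].
  + by rewrite eqxx orbT.
  + by apply/orP; left; apply/memQ.
Qed.

Definition alg_inv k (n : A -> nat) (Q : A -> seq nat) :=
  forall a, alg_inv_at k a (n a) (Q a).

Lemma alg_run_Rset_union w k n Q c : alg_inv k n Q -> drop k u = w ->
  forall t, t < size w ->
  Rset_union (k + t).+1 (nth c w t) (nth [::] (alg_run n Q k.+1 w) t).
Proof.
elim: w k n Q => [// | b w IH] k n Q inv drop_k.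
have k_lt : k < size u by rewrite -subn_gt0 -size_drop drop_k.
have u_k : nth b u k = b by rewrite -[k]addn0 -nth_drop drop_k.
have x_succ := shortest_succ k_lt u_k (inv b).
case=> [_ | t] /=; first by rewrite addn0; exact: alg_inv_at_Rset_union (inv b).
rewrite ltnS -addSnnS => t_lt; apply: IH t_lt => [a /= |]; last first.
  by rewrite -add1n -drop_drop drop_k drop1.
case: eqVneq => [-> | a_b]; first exact: alg_inv_at_letter.
by apply: alg_inv_at_other (inv a); rewrite // (set_nth_default b) // u_k eq_sym.
Qed.

End Rankers.

Theorem proposition21 (A : finType) (u : seq A) (i : nat) (c : A) :
  0 < i <= size u -> nth c u i.-1 = c ->
  forall r : seq A,
    Rset u i r <->
    ((algP u i = [::] /\ r = [:: c]) \/
     (exists2 j, j \in algP u i & exists2 r', Rset u j r' & r = rcons r' c)).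
Proof.
move=> /andP [i_gt0 i_le] u_i.
have := alg_run_Rset_union c (@alg_inv_at0 _ u) (drop0 u) (t := i.-1).
by rewrite add0n prednK // u_i; apply.
Qed.
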